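(* Every minimally $1/2$-tough claw-free graph has a vertex of degree $1$.
   Context: All graphs are finite, simple and undirected. A graph is claw-free if it contains no induced subgraph isomorphic to $K_{1,3}$. $\omega(H)$ denotes the number of components of $H$. A cutset of $G$ is a vertex set $S$ with $G-S$ disconnected. For positive real $t$, $G$ is $t$-tough if $\omega(G-S)\le |S|/t$ for every cutset $S$; the toughness $\tau(G)$ is the largest such $t$, with $\tau(K_n)=\infty$ for all $n\ge1$. $G$ is minimally $t$-tough if $\tau(G)=t$ and $\tau(G-e)<t$ for every edge $e$ of $G$. *)

From mathcomp Require Import all_boot all_order all_algebra.
Set Implicit Arguments. Unset Strict Implicit. Unset Printing Implicit Defensive.
Import Order.TTheory GRing.Theory Num.Theory.

Section Graphs.
Variable T : finType.

Definition simple_graph (e : rel T) : Prop := symmetric e /\ irreflexive e.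

Definition del_rel (e : rel T) (S : {set T}) : rel T :=
  fun x y => [&& e x y, x \notin S & y \notin S].

Definition ncomp (e : rel T) (S : {set T}) : nat :=
  #|[set [set y in ~: S | connect (del_rel e S) x y] | x in ~: S]|.

Definition cutset (e : rel T) (S : {set T}) : Prop := 1 < ncomp e S.

Definition tough (e : rel T) (t : rat) : Prop :=
  forall S : {set T}, cutset e S -> ((ncomp e S)%:R <= (#|S|)%:R / t)%R.

(* tau(G) = t : t is the largest (supremum) value for which G is t-tough;
   t-toughness is defined for positive t, and tau = 0 for disconnected
   graphs (no positive t works).  For complete graphs no such t exists
   (tau = infinity). *)
Definition tau_is (e : rel T) (t : rat) : Prop :=
  [/\ (0 <= t)%R,
      (forall s : rat, (0 < s)%R -> (s <= t)%R -> tough e s) &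
      forall s : rat, (t < s)%R -> ~ tough e s].

Definition del_edge (e : rel T) (u v : T) : rel T :=
  fun x y => e x y && ~~ (((x == u) && (y == v)) || ((x == v) && (y == u))).

(* tau(G) < t (tau = infinity, i.e. no cutset, never satisfies this) *)
Definition toughness_lt (e : rel T) (t : rat) : Prop :=
  exists t' : rat, tau_is e t' /\ (t' < t)%R.

Definition minimally_tough (e : rel T) (t : rat) : Prop :=
  tau_is e t /\
  forall u v : T, e u v -> toughness_lt (del_edge e u v) t.

Definition claw_free (e : rel T) : Prop :=
  ~ exists x a b c : T,
      [/\ e x a, e x b, e x c,
          [&& a != b, a != c & b != c] &
          [&& ~~ e a b, ~~ e a c & ~~ e b c]].

Definition deg (e : rel T) (x : T) : nat := #|[set y | e x y]|.

End Graphs.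

From mathcomp Require Import all_boot all_order all_algebra.
From mathcomp Require Import lra.
Set Implicit Arguments. Unset Strict Implicit. Unset Printing Implicit Defensive.
Import Order.TTheory GRing.Theory Num.Theory.

(* Suppose no vertex has degree 1.  As tau(G) = 1/2, G is connected and, for
   every edge uv, G - uv has a cutset S with more than 2|S| components.  When
   uv is not a bridge, every component of G - uv - S sees S, so by pigeonhole
   some s in S sees three components; claw-freeness makes two of the three
   neighbours of s adjacent, which across components forces them to be u and v.
   Re-choosing attachments shows that s is the only vertex of S seen by the
   components of u and v, and only from u and v themselves.  Hence the
   component of u, or of the hub s, is a smaller "pendant" set: closed under
   adjacency except at one vertex, where it has a neighbour.  Every pendant set
   thus contains a strictly smaller one, yet V is pendant at any vertex. *)

Lemma pigeonhole_triple (aT rT : finType) (X : {set aT}) (Y : {set rT}) (g : aT -> rT) :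
  {in X, forall x, g x \in Y} -> #|Y| * 2 < #|X| ->
  exists2 y, y \in Y & 2 < #|[set x in X | g x == y]|.
Proof.
move=> gXY big; have [/exists_inP // | /exists_inPn few] :=
  boolP [exists y in Y, 2 < #|[set x in X | g x == y]|].
exfalso; move: big; rewrite ltnNge => /negP; apply.
have -> : #|X| = \sum_(y in Y) #|[set x in X | g x == y]|.
  rewrite -sum1_card (partition_big g (mem Y)) //=; apply: eq_bigr => y _.
  by rewrite -sum1_card; apply: eq_bigl => x; rewrite inE.
by rewrite -sum_nat_const leq_sum // => y /few; rewrite -leqNgt.
Qed.

Lemma claw_free_triple (T : finType) (e : rel T) s a b c : claw_free e ->
  e s a -> e s b -> e s c -> [&& a != b, a != c & b != c] -> [|| e a b, e a c | e b c].
Proof.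
move=> claw esa esb esc neq; apply/negPn/negP => indep; apply: claw.
by exists s, a, b, c; split => //; move: indep; rewrite !negb_or.
Qed.

Section Components.
Variable T : finType.
Implicit Types (e : rel T) (S A Z : {set T}).

Definition component e S c : {set T} := [set y in ~: S | connect (del_rel e S) c y].

Lemma mem_component e S c y :
  (y \in component e S c) = (y \notin S) && connect (del_rel e S) c y.
Proof. by rewrite !inE. Qed.

Lemma ncompE e S : ncomp e S = #|[set component e S c | c in ~: S]|.
Proof. by []. Qed.

Lemma del_rel0 e : del_rel e set0 =2 e.
Proof. by move=> x y; rewrite /del_rel !inE !andbT. Qed.

Lemma del_rel_sym e S : symmetric e -> symmetric (del_rel e S).
Proof. by move=> se x y; rewrite /del_rel se; congr (_ && _); apply: andbC. Qed.

Lemma del_edge_sym e u v : symmetric e -> symmetric (del_edge e u v).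
Proof.
by move=> se x y; rewrite /del_edge se orbC; congr (_ && ~~ (_ || _)); apply: andbC.
Qed.

Lemma connect_del_rel_notin e S p q :
  p \notin S -> connect (del_rel e S) p q -> q \notin S.
Proof.
have clS : closed (del_rel e S) [pred t | t \notin S].
  by move=> x y /and3P[_ xS yS]; rewrite !inE xS yS.
by move=> pS /(closed_connect clS); rewrite !inE pS => <-.
Qed.

Lemma component_eq e S p q : symmetric e ->
  connect (del_rel e S) p q -> component e S p = component e S q.
Proof.
move=> se pq; apply/setP => y; rewrite !mem_component; congr (_ && _).
apply/idP/idP; last exact: connect_trans.
by rewrite (sym_connect_sym (del_rel_sym S se)) in pq; apply: connect_trans.
Qed.

Lemma component_neq e S p q : component e S p != component e S q -> p != q.
Proof. by apply: contra => /eqP->. Qed.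

Lemma ncomp_gt1P e S : symmetric e ->
  reflect (exists p q, [/\ p \notin S, q \notin S & ~~ connect (del_rel e S) p q])
          (1 < ncomp e S).
Proof.
move=> se; rewrite ncompE; apply: (iffP card_gt1P).
  case=> _ [_ [/imsetP[p pS ->] /imsetP[q qS ->] neq]].
  exists p, q; rewrite -!in_setC; split => //.
  by apply: contra neq => /(component_eq se) ->.
case=> p [q [pS qS npq]]; exists (component e S p), (component e S q).
split; [by apply: imset_f; rewrite inE | by apply: imset_f; rewrite inE |].
apply: contraNneq npq => eqpq.
have : q \in component e S q by rewrite mem_component qS connect0.
by rewrite -eqpq mem_component => /andP[].
Qed.

Lemma connect_exit e S p q : connect e p q -> p \notin S -> q \in S ->
  exists t r, [/\ connect (del_rel e S) p t, r \in S & e t r].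
Proof.
case/connectP => s + ->; elim: s p => [|w s IHs] p /=; first by move=> _ /negPf->.
case/andP => epw pw pS lastS; case: (boolP (w \in S)) => wS.
  by exists p, w; rewrite connect0.
have [t [r [wt rS etr]]] := IHs w pw wS lastS.
exists t, r; split => //; apply: connect_trans wt; apply: connect1.
by rewrite /del_rel epw pS wS.
Qed.

Definition pendant e A a : Prop :=
  [/\ a \in A, forall t r, t \in A -> t != a -> e t r -> r \in A
    & exists2 b, b \in A & e a b].

Lemma pendant_component e (R : rel T) z : subrel R e ->
    (forall t r, connect R z t -> t != z -> e t r -> R t r) -> (exists b, R z b) ->
  pendant e [set t | connect R z t] z.
Proof.
move=> Re closedR [b Rzb]; split; first by rewrite inE connect0.
  move=> t r; rewrite !inE => zt tz etr.
  exact: connect_trans zt (connect1 (closedR _ _ zt tz etr)).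
by exists b; rewrite ?inE ?connect1 ?Re.
Qed.

Lemma pendant_meet e A a Z z : pendant e A a -> pendant e Z z ->
  z \in A -> z != a -> a \notin Z -> pendant e (A :&: Z) z.
Proof.
case=> _ clA _ [zZ clZ [b bZ ezb]] zA za aZ; split.
- by rewrite inE zA.
- move=> t r /setIP[tA tZ] tz etr; rewrite inE (clZ t) // andbT.
  by apply: (clA t) => //; apply: contraNneq aZ => <-.
- by exists b; rewrite // inE bZ (clA z) // andbT.
Qed.

End Components.

Section CutHub.
Variables (T : finType) (e : rel T) (u v : T) (S : {set T}).
Hypotheses (e_sym : symmetric e) (e_claw : claw_free e).
Local Notation H := (del_edge e u v).
Local Notation R := (del_rel H S).
Local Notation C := (component H S).
Hypotheses (H_connected : forall p q, connect H p q) (S_neq0 : S != set0).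
Hypothesis S_big : #|S| * 2 < ncomp H S.

Let H_sym : symmetric H := del_edge_sym u v e_sym.
Let C_neq p q : C p != C q -> p != q := @component_neq T H S p q.

Lemma cross_edge p q : p \notin S -> q \notin S -> e p q -> C p != C q ->
  ((p == u) && (q == v)) || ((p == v) && (q == u)).
Proof.
move=> pS qS epq; apply: contraNT => nuv; apply/eqP/component_eq => //.
by apply: connect1; rewrite /del_rel /del_edge epq nuv pS qS.
Qed.

Definition attaches (K : {set T}) r := (r \in S) && [exists t in K, e r t].

Lemma component_attached c : c \notin S -> exists r, attaches (C c) r.
Proof.
move=> cS; have /set0Pn[s0 s0S] := S_neq0.
have [t [r [ct rS Htr]]] := connect_exit (H_connected c s0) cS s0S.
exists r; rewrite /attaches rS; apply/exists_inP; exists t.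
  by rewrite mem_component (connect_del_rel_notin cS ct) ct.
by rewrite e_sym; case/andP: Htr.
Qed.

Definition hub_spec (g : {set T} -> T) s :=
  [/\ g (C u) = s, g (C v) = s, e s u & e s v] /\
  [/\ u \notin S, v \notin S, C u != C v
    & exists2 d, e s d & [&& d \notin S, C d != C u & C d != C v]].

Lemma hub_of_three g s a b c :
    [&& a \notin S, e s a & g (C a) == s] -> [&& b \notin S, e s b & g (C b) == s] ->
    [&& c \notin S, e s c & g (C c) == s] ->
    [&& C a != C b, C a != C c & C b != C c] -> e a b ->
  hub_spec g s.
Proof.
move=> /and3P[aS esa /eqP ga] /and3P[bS esb /eqP gb] /and3P[cS esc /eqP gc].
move=> /and3P[ab ac bc] eab; rewrite ![C _ == C c]eq_sym in ac bc.
case/orP: (cross_edge aS bS eab ab) => /andP[/eqP ea /eqP eb]; subst a b.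
  by split; split=> //; exists c; rewrite ?cS ?ac ?bc.
by split; split; rewrite 1?eq_sym //; exists c; rewrite ?cS ?ac ?bc.
Qed.

Lemma attachment_map_hub g :
  (forall c, c \notin S -> attaches (C c) (g (C c))) -> exists s, hub_spec g s.
Proof.
move=> gP; pose comps := [set C c | c in ~: S].
have gS : {in comps, forall K, g K \in S}.
  by move=> _ /imsetP[c cS ->]; rewrite in_setC in cS; case/andP: (gP c cS).
have [s _ /card_gt2P[K1 [K2 [K3 [[K1s K2s K3s] [n12 n23 n31]]]]]] :=
  pigeonhole_triple gS S_big.
have rep K : K \in [set L in comps | g L == s] ->
    exists2 t, [&& t \notin S, e s t & g (C t) == s] & K = C t.
  rewrite inE => /andP[/imsetP[c cS ->] /eqP gc]; rewrite in_setC in cS.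
  case/andP: (gP c cS) => _ /exists_inP[t]; rewrite mem_component gc.
  case/andP=> tS ct est; have Cct := component_eq H_sym ct.
  by exists t => //; rewrite tS est -Cct gc eqxx.
have [t1 P1 E1] := rep _ K1s; have [t2 P2 E2] := rep _ K2s; have [t3 P3 E3] := rep _ K3s.
subst K1 K2 K3; exists s.
have /and3P[_ es1 _] := P1; have /and3P[_ es2 _] := P2; have /and3P[_ es3 _] := P3.
rewrite eq_sym in n31.
have neq : [&& t1 != t2, t1 != t3 & t2 != t3] by rewrite !C_neq.
case/or3P: (claw_free_triple e_claw es1 es2 es3 neq) => adj.
- by apply: (hub_of_three P1 P2 P3 _ adj); rewrite n12 n31 n23.
- by apply: (hub_of_three P1 P3 P2 _ adj); rewrite n12 n31 eq_sym n23.
- by apply: (hub_of_three P2 P3 P1 _ adj); rewrite n23 eq_sym n12 eq_sym n31.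
Qed.

Let attach K := odflt u [pick r | attaches K r].

Lemma attachP c : c \notin S -> attaches (C c) (attach (C c)).
Proof.
move/component_attached => [r Kr]; rewrite /attach.
by case: pickP => [// | /(_ r)]; rewrite Kr.
Qed.

(* Redirecting C u to r yields another attachment map, which still agrees with
   attach on C v. *)
Lemma attaches_unique r : attaches (C u) r -> r = attach (C v).
Proof.
move=> ur; pose g K := if K == C u then r else attach K.
have gP c : c \notin S -> attaches (C c) (g (C c)).
  by move=> cS; rewrite /g; case: eqP => [-> | _]; [exact: ur | exact: attachP].
have [s [[gu gv _ _] [_ _ nuv _]]] := attachment_map_hub gP.
by move: gu gv; rewrite /g eqxx eq_sym (negPf nuv) => -> ->.
Qed.

Lemma cut_hub : exists s,
  [/\ s \in S, e s u, e s v, u \notin S & ~~ connect R u v] /\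
  (exists2 d, e s d & d \notin [:: u; v]) /\
  (forall t r, connect R u t -> r \in S -> e t r -> t = u /\ r = s).
Proof.
have [s [[gu gv esu esv] [uS vS nuv [d esd /and3P[dS du dv]]]]] :=
  attachment_map_hub attachP.
have [uv d_u d_v] : [/\ u != v, d != u & d != v] by rewrite !C_neq.
exists s; split; [split=> // | split].
- by case/andP: (attachP uS); rewrite gu.
- by apply: contra nuv => /(component_eq H_sym)->.
- by exists d; rewrite // !inE negb_or d_u d_v.
move=> t r ut rS etr; have tS := connect_del_rel_notin uS ut.
rewrite (component_eq H_sym ut) in nuv du.
have t_v : t != v by rewrite C_neq.
have rs : r = s.
  rewrite -gv; apply: attaches_unique; rewrite /attaches rS; apply/exists_inP; exists t.
    by rewrite mem_component tS.
  by rewrite e_sym.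
split=> //; subst r; rewrite e_sym in etr.
have neq : [&& t != v, t != d & v != d] by rewrite t_v !C_neq // eq_sym.
case/or3P: (claw_free_triple e_claw etr esv esd neq) => adj.
- case/orP: (cross_edge tS vS adj nuv) => /andP[/eqP tu /eqP vu] //.
  by rewrite vu eqxx in uv.
- have Ctd : C t != C d by rewrite eq_sym.
  case/orP: (cross_edge tS dS adj Ctd) => /andP[/eqP tx /eqP dy].
    by rewrite dy eqxx in d_v.
  by rewrite tx eqxx in t_v.
- have Cvd : C v != C d by rewrite eq_sym.
  case/orP: (cross_edge vS dS adj Cvd) => /andP[/eqP vx /eqP dy].
    by rewrite vx eqxx in uv.
  by rewrite dy eqxx in d_u.
Qed.

End CutHub.

Section MinimallyHalfTough.
Variables (T : finType) (e : rel T).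
Hypotheses (e_sym : symmetric e) (e_irr : irreflexive e) (e_claw : claw_free e).
Hypothesis e_connected : forall p q, connect e p q.
Hypothesis edge_cut : forall u v, e u v ->
  exists S, cutset (del_edge e u v) S /\ #|S| * 2 < ncomp (del_edge e u v) S.
Hypothesis no_leaf : forall v, deg e v != 1.

Let neq_of_edge p q : e p q -> p != q.
Proof. by move=> epq; apply: contraTneq epq => ->; rewrite e_irr. Qed.

Lemma other_neighbour v w : e v w -> exists2 c, e v c & c != w.
Proof.
move=> evw; have : 1 < deg e v.
  rewrite ltn_neqAle eq_sym no_leaf card_gt0; apply/set0Pn.
  by exists w; rewrite inE.
case/card_gt1P => c1 [c2 []]; rewrite !inE => evc1 evc2 c12.
have [c1w | c1w] := eqVneq c1 w; last by exists c1.
by exists c2; rewrite // -c1w eq_sym.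
Qed.

Lemma del_edge_connected u v : connect (del_edge e u v) u v ->
  forall p q, connect (del_edge e u v) p q.
Proof.
move=> cuv p q; apply: connect_sub (e_connected p q) => a b eab.
have [/orP[] /andP[/eqP-> /eqP->] // | nab] :=
  boolP (((a == u) && (b == v)) || ((a == v) && (b == u))).
  by rewrite (sym_connect_sym (del_edge_sym u v e_sym)).
by apply: connect1; rewrite /del_edge eab nab.
Qed.

Lemma bridge_pendant x a : e x a -> ~~ connect (del_edge e x a) x a ->
  pendant e [set t | connect (del_edge e x a) x t] x.
Proof.
move=> exa nxa; have [c exc ca] := other_neighbour exa.
apply: pendant_component => [p q /andP[] // | t r xt tx etr |].
  have ta : t != a by apply: contraNneq nxa => ta; rewrite ta in xt.
  by rewrite /del_edge etr (negPf tx) (negPf ta).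
by exists c; rewrite /del_edge exc eqxx (negPf ca) (negPf (neq_of_edge exa)).
Qed.

Lemma nonbridge_edge u v : e u v -> connect (del_edge e u v) u v ->
  exists s, [/\ e s u, e s v & exists2 d, e s d & d \notin [:: u; v]] /\
    ((exists Z, [/\ pendant e Z u, v \notin Z & s \notin Z])
     \/ forall r, e u r -> r \in [:: v; s]).
Proof.
move=> euv cuv; have Hconn := del_edge_connected cuv.
have [S [Scut Sbig]] := edge_cut euv.
have S_neq0 : S != set0.
  apply: contraTneq Scut => ->; apply/(ncomp_gt1P _ (del_edge_sym u v e_sym)).
  by case=> p [q [_ _]]; rewrite (eq_connect (@del_rel0 _ _)) Hconn.
have [s [[sS esu esv uS nuv] [hd closedR]]] :=
  cut_hub e_sym e_claw Hconn S_neq0 Sbig.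
exists s; split=> //.
set R := del_rel (del_edge e u v) S.
have [b Rub | noR] := pickP (R u); [left | right].
  exists [set t | connect R u t]; split.
  - apply: pendant_component => [p q /and3P[/andP[]] // | t r ut tu etr |].
      have tv : t != v by apply: contraNneq nuv => tv; rewrite tv in ut.
      have rS : r \notin S.
        by apply/negP => /(closedR t r ut)/(_ etr) [/eqP]; rewrite (negPf tu).
      have tS := connect_del_rel_notin uS ut.
      by rewrite /R /del_rel /del_edge etr (negPf tu) (negPf tv) rS tS.
    by exists b.
  - by rewrite inE.
  - by rewrite inE; apply: contraTN sS => /(connect_del_rel_notin uS).
move=> r eur; have [rS | rS] := boolP (r \in S).
  by have [_ ->] := closedR u r (connect0 _ _) rS eur; rewrite !inE eqxx orbT.
rewrite !inE; apply/orP; left; apply: contraFT (noR r) => rv.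
by rewrite /R /del_rel /del_edge eur eqxx (negPf rv) (negPf (neq_of_edge euv)) uS rS.
Qed.

(* If x has no neighbours besides a and the hub s, the edge sx lies on the
   triangle xas; its own hub must then be a, and N(s) = {x, a} contradicts the
   third neighbour d of s. *)
Lemma edge_pendant x a : e x a ->
  exists Z z, [/\ pendant e Z z, a \notin Z, z != a & (z == x) || e x z].
Proof.
move=> exa; have [cxa | nxa] := boolP (connect (del_edge e x a) x a); last first.
  exists [set t | connect (del_edge e x a) x t], x.
  by split; rewrite ?inE ?eqxx ?neq_of_edge //; apply: bridge_pendant.
have [s [[esx esa [d esd dxa]] [[Z [Zx aZ _]] | Nx]]] := nonbridge_edge exa cxa.
  by exists Z, x; split; rewrite ?eqxx ?neq_of_edge.
have [exs eax] : e x s /\ e a x by split; rewrite e_sym.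
have csx : connect (del_edge e s x) s x.
  have [ax sa sx] : [/\ a != x, s != a & s != x] by rewrite !neq_of_edge.
  apply: (@connect_trans _ _ a); apply: connect1; rewrite /del_edge.
    by rewrite esa (negPf ax) (negPf sx) !andbF.
  by rewrite eax eq_sym (negPf sa) (negPf ax).
have [s2 [[es2s es2x _] Ns]] := nonbridge_edge esx csx.
have s2a : s2 = a.
  have /Nx := etrans (e_sym _ _) es2x.
  by rewrite !inE (negPf (neq_of_edge es2s)) orbF => /eqP.
case: Ns => [[Z [Zs _ s2Z]] | Ns].
  by exists Z, s; split; rewrite -?s2a ?exs ?orbT ?neq_of_edge // s2a.
by move: (Ns d esd) dxa; rewrite s2a !inE => ->.
Qed.

Lemma no_pendant A a : ~ pendant e A a.
Proof.
have [n] := ubnP #|A|; elim: n A a => // n IHn A a /ltnSE leAn pA.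
have [aA closedA [x xA eax]] := pA.
have exa : e x a by rewrite e_sym.
have [Z [z [pZ aZ za zx]]] := edge_pendant exa.
have xa : x != a by rewrite neq_of_edge.
have zA : z \in A by case/orP: zx => [/eqP-> // | exz]; exact: closedA xA xa exz.
apply: (IHn (A :&: Z) z _ (pendant_meet pA pZ zA za aZ)).
apply: leq_trans leAn; apply: proper_card; apply/properP; split; first exact: subsetIl.
by exists a; rewrite // inE (negPf aZ) andbF.
Qed.

End MinimallyHalfTough.

Lemma ler_div_half (m n : nat) : ((m%:R : rat) <= n%:R / (1 / 2))%R = (m <= n * 2).
Proof. by rewrite mul1r invrK -natrM ler_nat. Qed.

Section Toughness.
Variable T : finType.
Implicit Type e : rel T.

Lemma not_tough_cutset e t : ~ tough e t ->
  exists S, cutset e S /\ ((#|S|)%:R / t < (ncomp e S)%:R)%R.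
Proof.
move=> nt; have [/existsP[S /andP[cS big]] | /existsPn none] :=
  boolP [exists S : {set T}, (1 < ncomp e S) && ((#|S|)%:R / t < (ncomp e S)%:R)%R].
  by exists S.
by case: nt => S cS; move: (none S); rewrite /cutset in cS; rewrite cS -leNgt.
Qed.

Lemma half_tough_connected e : symmetric e -> tough e (1 / 2)%R ->
  forall p q, connect e p q.
Proof.
move=> se te p q; apply: contraT => npq.
have cut : cutset e set0.
  by apply/(ncomp_gt1P _ se); exists p, q; rewrite !inE (eq_connect (del_rel0 e)).
by have := te _ cut; rewrite ler_div_half cards0 leqNgt (ltn_trans _ cut).
Qed.

Lemma not_tough_edge e t : symmetric e -> (forall p q, connect e p q) -> ~ tough e t ->
  exists v w, e v w.
Proof.
move=> se conn /not_tough_cutset[S [/(ncomp_gt1P _ se)[p [q [_ _ npq]]] _]].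
have pq : p != q by apply: contraNneq npq => ->.
have /connectP[[|w s] /= pth qE] := conn p q; first by rewrite qE eqxx in pq.
by exists p, w; case/andP: pth.
Qed.

Lemma minimally_half_tough_edge_cut e u v : minimally_tough e (1 / 2)%R -> e u v ->
  exists S, cutset (del_edge e u v) S /\ #|S| * 2 < ncomp (del_edge e u v) S.
Proof.
case=> _ min_e /min_e[t [[_ _ not_tough] lt_t_half]].
have [S [cS]] := not_tough_cutset (not_tough _ lt_t_half).
by rewrite ltNge ler_div_half -ltnNge; exists S.
Qed.

End Toughness.

Theorem mainTheorem13 (T : finType) (e : rel T) :
  simple_graph e -> claw_free e -> minimally_tough e (1 / 2)%R ->
  exists v : T, deg e v = 1%N.
Proof.
move=> [e_sym e_irr] e_claw min_e; have [[_ tough_e not_tough_e] _] := min_e.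
have [/existsP[v /eqP] | /existsPn no_leaf] := boolP [exists v, deg e v == 1].
  by exists v.
have e_conn : forall p q, connect e p q.
  by apply: half_tough_connected e_sym (tough_e _ _ (lexx _)); lra.
have [v [w evw]] : exists v w, e v w.
  by apply: (not_tough_edge e_sym e_conn (not_tough_e 1%R _)); lra.
have edge_cut u v := @minimally_half_tough_edge_cut _ e u v min_e.
have := no_pendant e_sym e_irr e_claw e_conn edge_cut no_leaf (A := [set: T]) (a := v).
by case; split=> [|t r|]; rewrite ?inE //; exists w; rewrite ?inE.
Qed.
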